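(* Suppose that $$\|\theta^*\|\,\mathbb{E}_{x\sim Q}\Big[\sup_{\delta\in\mathbb{R}^D:\|\delta\|\le\|\theta^*\|}\|\nabla_\theta r(x;\theta^*+\delta)\|\Big]\le c,\qquad 0<c<1.$$ Then $\mathbb{E}_{x\sim Q}\big[\inf_{\delta\in\mathbb{R}^D:\|\delta\|\le\|\theta^*\|}r(x;\theta^*+\delta)\big]\ge 1-c$.
   Context: $Q$ is a distribution on $\mathbb{R}^m$ with density $q$; $f:\mathbb{R}^m\to\mathbb{R}^D$ is a feature map; the density ratio model is $r(x;\theta)=\exp(\theta^\top f(x))/N(\theta)$ with $N(\theta)=\mathbb{E}_{x\sim Q}[\exp(\theta^\top f(x))]$; $\theta^*\in\mathbb{R}^D$ is fixed; $\|\cdot\|$ is the Euclidean norm and $\nabla_\theta r$ the gradient in $\theta$. *)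

From HB Require Import structures.
From mathcomp Require Import all_boot all_order all_algebra.
From mathcomp Require Import all_classical all_reals all_analysis measurable_realfun.
Set Implicit Arguments. Unset Strict Implicit. Unset Printing Implicit Defensive.
Import Order.TTheory GRing.Theory Num.Theory.
Import numFieldNormedType.Exports.
Local Open Scope classical_set_scope.
Local Open Scope ring_scope.

Definition dotv (R : realType) (D : nat) (a b : 'rV[R]_D) : R :=
  \sum_(i < D) a 0 i * b 0 i.

Definition enorm (R : realType) (D : nat) (v : 'rV[R]_D) : R :=
  Num.sqrt (dotv v v).

Definition Nconst (R : realType) (d : measure_display) (X : measurableType d)
  (Q : probability X R) (D : nat) (f : X -> 'rV[R]_D) (theta : 'rV[R]_D) : \bar R :=
  (\int[Q]_x (expR (dotv theta (f x)))%:E)%E.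

Definition dratio (R : realType) (d : measure_display) (X : measurableType d)
  (Q : probability X R) (D : nat) (f : X -> 'rV[R]_D) (x : X) (theta : 'rV[R]_D) : R :=
  expR (dotv theta (f x)) / fine (Nconst Q f theta).

Definition grad (R : realType) (D : nat) (g : 'rV[R]_D -> R) (theta : 'rV[R]_D)
  : 'rV[R]_D :=
  \row_(i < D) ('D_(delta_mx 0 i) g theta).

Definition eball (R : realType) (D : nat) (rho : R) : set 'rV[R]_D :=
  [set delta | enorm delta <= rho].

From HB Require Import structures.
From mathcomp Require Import all_boot all_order all_algebra.
From mathcomp Require Import all_classical all_reals all_analysis measurable_realfun.
From mathcomp Require Import ring lra.
Import Order.TTheory GRing.Theory Num.Theory.
Import numFieldNormedType.Exports.
Local Open Scope classical_set_scope.
Local Open Scope ring_scope.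

(* Fix x and let k = ||theta_star||.  For delta in the ball of radius k, the
   mean value theorem on the segment from theta_star to theta_star + delta gives
   r(x, theta_star) <= r(x, theta_star + delta) + k * sup_ball ||grad r(x, .)||,
   hence r(x, theta_star) <= I(x) + k S(x).  Integrating against Q, and using
   E_Q[r(x, theta_star)] = 1, yields 1 <= E_Q[I] + k E_Q[S] <= E_Q[I] + c. *)

Section RowVectorCalculus.
Local Set Implicit Arguments.
Local Unset Strict Implicit.
Context {R : realType} {D : nat}.
Implicit Types (a b v : 'rV[R]_D).

Lemma dotv_ge0 a : 0 <= dotv a a.
Proof. by apply: sumr_ge0 => i _; rewrite -expr2 sqr_ge0. Qed.

Lemma dotv_eq0 a : (dotv a a == 0) = (a == 0).
Proof.
apply/idP/eqP => [|->]; last by rewrite /dotv big1 // => i _; rewrite mxE mul0r.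
rewrite /dotv psumr_eq0 => [/allP a0|i _]; last by rewrite -expr2 sqr_ge0.
apply/rowP => i; rewrite mxE; apply/eqP.
by have := a0 i (mem_index_enum _); rewrite /= mulf_eq0 orbb.
Qed.

Lemma dotv_sumB_sqr a b (x y : R) :
  \sum_(i < D) (x * a 0 i - y * b 0 i) ^+ 2 =
  x ^+ 2 * dotv a a - 2 * x * y * dotv a b + y ^+ 2 * dotv b b.
Proof.
rewrite /dotv !mulr_sumr -sumrB -big_split /=.
by apply: eq_bigr => i _; ring.
Qed.

Lemma dotv_CauchySchwarz a b : dotv a b ^+ 2 <= dotv a a * dotv b b.
Proof.
have quad_ge0 x y :
    0 <= x ^+ 2 * dotv a a - 2 * x * y * dotv a b + y ^+ 2 * dotv b b.
  by rewrite -dotv_sumB_sqr; apply: sumr_ge0 => i _; exact: sqr_ge0.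
have [/eqP|b0] := eqVneq (dotv b b) 0.
  rewrite dotv_eq0 => /eqP ->.
  have -> : dotv a 0 = 0 by rewrite /dotv big1 // => i _; rewrite mxE mulr0.
  by rewrite expr0n mulr_ge0 ?dotv_ge0.
have bb_gt0 : 0 < dotv b b by rewrite lt0r b0 dotv_ge0.
have := quad_ge0 (dotv b b) (dotv a b); nra.
Qed.

Lemma enorm_ge0 v : 0 <= enorm v.
Proof. exact: sqrtr_ge0. Qed.

Lemma enorm0 : enorm (0 : 'rV[R]_D) = 0.
Proof. by apply/eqP; rewrite sqrtr_eq0 le_eqVlt dotv_eq0 eqxx. Qed.

Lemma dotv_abs_le a b : `|dotv a b| <= enorm a * enorm b.
Proof.
rewrite /enorm -sqrtrM ?dotv_ge0 // -sqrtr_sqr.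
exact/ler_wsqrtr/dotv_CauchySchwarz.
Qed.

Lemma enormZ (t : R) v : enorm (t *: v) = `|t| * enorm v.
Proof.
rewrite /enorm -sqrtr_sqr -sqrtrM ?sqr_ge0 //; congr Num.sqrt.
rewrite /dotv mulr_sumr; apply: eq_bigr => i _; rewrite !mxE; ring.
Qed.

Lemma eballZ (rho t : R) v : 0 <= t <= 1 -> eball rho v -> eball rho (t *: v).
Proof.
rewrite /eball /= enormZ => /andP[t0 t1] vrho.
have := enorm_ge0 v; rewrite ger0_norm //; nra.
Qed.

Lemma eball0 (rho : R) : 0 <= rho -> eball rho (0 : 'rV[R]_D).
Proof. by rewrite /eball /= enorm0. Qed.

Lemma derive_dotv_grad (g : 'rV[R]_D -> R) p v : differentiable g p ->
  'D_v g p = dotv v (grad g p).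
Proof.
move=> dg; rewrite deriveE // {1}(row_sum_delta v) linear_sum /dotv.
by apply: eq_bigr => i _; rewrite linearZ /= mxE deriveE.
Qed.

Lemma mean_value_enorm_grad (g : 'rV[R]_D -> R) a v :
  (forall t : R, 0 <= t <= 1 -> differentiable g (a + t *: v)) ->
  exists2 t : R, 0 <= t <= 1 &
    g a - enorm v * enorm (grad g (a + t *: v)) <= g (a + v).
Proof.
move=> dg; pose h (t : R) := g (a + t *: v).
have h_derive t : 0 <= t <= 1 -> derivable h t 1 /\ 'D_1 h t = 'D_v g (a + t *: v).
  move=> t01; rewrite /derivable /derive.
  suff -> : (fun s : R => s^-1 *: ((h \o shift t) (s *: 1) - h t)) =
      (fun s => s^-1 *: ((g \o shift (a + t *: v)) (s *: v) - g (a + t *: v))).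
    by split; [exact: diff_derivable (dg _ t01)|].
  apply: funext => s /=; rewrite /h /shift /= [s *: 1]mulr1.
  by rewrite scalerDl addrCA addrC.
have [t t01 ht] : exists2 t, t \in `]0, 1[ & h 1 - h 0 = 'D_1 h t * (1 - 0).
  apply: MVT => //.
    move=> s; rewrite in_itv /= => /andP[s0 s1].
    by apply/derivableP/(h_derive s _).1; rewrite !ltW.
  apply: continuous_in_subspaceT => s; rewrite inE /= in_itv /= => s01.
  exact/differentiable_continuous/derivable1_diffP/(h_derive s s01).1.
move: t01; rewrite in_itv /= => /andP[t0 t1].
have t01 : 0 <= t <= 1 by rewrite !ltW.
exists t => //; move: ht.
rewrite (h_derive t t01).2 derive_dotv_grad; last exact: dg.
rewrite /h scale1r scale0r addr0 => ht.
have := dotv_abs_le v (grad g (a + t *: v)).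
by rewrite ler_norml => /andP[lo _]; lra.
Qed.

Lemma le_ereal_inf_addr (A : set \bar R) (r : R) (b : \bar R) :
  (0 <= b)%E -> (forall y, A y -> 0 <= y)%E ->
  (forall y, A y -> r%:E <= y + b)%E -> (r%:E <= ereal_inf A + b)%E.
Proof.
move=> b0 A0 rA; have infA0 : (0 <= ereal_inf A)%E by exact: le_ereal_inf_tmp.
case: b b0 rA => [b _ rA| _ _|//]; last first.
  by rewrite addey ?leey // gt_eqF // (lt_le_trans _ infA0) ?ltNy0.
rewrite -leeBlDr //; apply: le_ereal_inf_tmp => y Ay.
by rewrite leeBlDr ?rA.
Qed.

Lemma ereal_sup_eball_ge0 (h : 'rV[R]_D -> R) (rho : R) :
  0 <= rho -> (forall v, 0 <= h v) ->
  (0 <= ereal_sup ((fun v => (h v)%:E) @` eball rho))%E.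
Proof.
move=> rho0 h0; apply: le_trans (ereal_sup_ubound _); last first.
  by exists 0; [exact: eball0|].
by rewrite lee_fin.
Qed.

Lemma inf_eball_ge (g : 'rV[R]_D -> R) a (rho : R) :
  0 <= rho ->
  (forall v, eball rho v -> differentiable g (a + v)) ->
  (forall v, eball rho v -> 0 <= g (a + v)) ->
  ((g a)%:E <= ereal_inf ((fun v => (g (a + v))%:E) @` eball rho)
     + rho%:E * ereal_sup ((fun v => (enorm (grad g (a + v)))%:E) @` eball rho))%E.
Proof.
move=> rho0 dg g0; apply: le_ereal_inf_addr.
- by rewrite mule_ge0 ?ereal_sup_eball_ge0 // => v; exact: enorm_ge0.
- by move=> _ [v /g0 ? <-]; rewrite lee_fin.
- move=> _ [v v_rho <-].
  have [t t01 gv] := mean_value_enorm_grad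
    (fun t t01 => dg _ (eballZ t01 v_rho)).
  apply: le_trans (_ : (g (a + v) + rho * enorm (grad g (a + t *: v)))%:E <= _)%E.
    rewrite lee_fin -lerBlDr (le_trans _ gv) // lerB // ler_wpM2r ?enorm_ge0 //.
  rewrite EFinD leeD2l // EFinM lee_wpmul2l ?lee_fin //.
  by apply: ereal_sup_ubound; exists (t *: v) => //; exact: eballZ.
Qed.

End RowVectorCalculus.

Lemma integral_EFin_gt0 (R : realType) (d : measure_display)
    (T : measurableType d) (mu : {measure set T -> \bar R}) (h : T -> R) :
  mu setT != 0%E -> measurable_fun setT (fun x => (h x)%:E) ->
  (forall x, 0 < h x) -> (0 < \int[mu]_x (h x)%:E)%E.
Proof.
move=> mu0 mh h0; rewrite lt0e integral_ge0 ?andbT; last first.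
  by move=> x _; rewrite lee_fin ltW.
apply: contra mu0 => /eqP int0.
have : (\int[mu]_x `|(h x)%:E| = 0)%E.
  by rewrite -int0; apply: eq_integral => x _; rewrite gee0_abs // lee_fin ltW.
case/(ae_eq_integral_abs _ measurableT mh) => N [_ N0 hN].
suff -> : setT = N by rewrite N0.
apply/seteqP; split=> // x _; apply: hN => /(_ Logic.I) hx0.
by have := h0 x; rewrite (EFin_inj hx0) ltxx.
Qed.

Section DensityRatio.
Context {R : realType} {d : measure_display} {X : measurableType d}.
Context {Q : probability X R} {D : nat} {f : X -> 'rV[R]_D}.

Lemma dratio_ge0 x theta : 0 <= dratio Q f x theta.
Proof. by rewrite divr_ge0 ?expR_ge0 // fine_ge0 // integral_ge0. Qed.

Hypothesis exp_integrable : forall theta : 'rV[R]_D,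
  Q.-integrable setT (fun x => (expR (dotv theta (f x)))%:E).

Lemma Nconst_fin_num theta : Nconst Q f theta \is a fin_num.
Proof. exact: (integrable_fin_num measurableT (exp_integrable theta)). Qed.

Lemma Nconst_gt0 theta : 0 < fine (Nconst Q f theta).
Proof.
have NQ_gt0 : (0 < Nconst Q f theta)%E.
  apply: integral_EFin_gt0 => [||x]; last exact: expR_gt0.
    by have /= -> := probability_setT Q; rewrite oner_neq0.
  exact: measurable_int (exp_integrable theta).
by rewrite fine_gt0 // NQ_gt0 ltey_eq Nconst_fin_num.
Qed.

Lemma dratioE x theta : ((dratio Q f x theta)%:E =
  (expR (dotv theta (f x)))%:E * ((fine (Nconst Q f theta))^-1)%:E)%E.
Proof. by rewrite -EFinM. Qed.

Lemma measurable_dratio theta :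
  measurable_fun setT (fun x => (dratio Q f x theta)%:E).
Proof.
rewrite (funext (dratioE ^~ theta)); apply: emeasurable_funM.
  exact: measurable_int (exp_integrable theta).
exact: measurable_cst.
Qed.

Lemma integral_dratio theta : (\int[Q]_x (dratio Q f x theta)%:E = 1)%E.
Proof.
under eq_integral do rewrite dratioE.
rewrite integralZr // -[X in (X * _)%E]fineK ?Nconst_fin_num //.
by rewrite -EFinM mulfV // gt_eqF ?Nconst_gt0.
Qed.

End DensityRatio.

Theorem proposition8 (R : realType) (d : measure_display) (X : measurableType d)
  (Q : probability X R) (D : nat) (f : X -> 'rV[R]_D) (theta_star : 'rV[R]_D)
  (c : R) :
  (forall i : 'I_D, measurable_fun setT (fun x => f x 0 i)) ->
  (forall theta : 'rV[R]_D,
      Q.-integrable setT (fun x => (expR (dotv theta (f x)))%:E)) ->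
  (forall (x : X) (delta : 'rV[R]_D), delta \in eball (enorm theta_star) ->
      differentiable (dratio Q f x) (theta_star + delta)) ->
  let S : X -> \bar R := fun x : X => ereal_sup
      ((fun delta => (enorm (grad (dratio Q f x) (theta_star + delta)))%:E)
         @` eball (enorm theta_star)) in
  let I : X -> \bar R := fun x : X => ereal_inf
      ((fun delta => (dratio Q f x (theta_star + delta))%:E)
         @` eball (enorm theta_star)) in
  measurable_fun setT S ->
  measurable_fun setT I ->
  0 < c -> c < 1 ->
  ((enorm theta_star)%:E * \int[Q]_x S x <= c%:E)%E ->
  ((1 - c)%:E <= \int[Q]_x I x)%E.
Proof.
move=> _ exp_int dr S I mS mI _ _ kS_le_c.
set k := enorm theta_star; have k0 : 0 <= k := enorm_ge0 _.
have S_ge0 x : (0 <= S x)%E.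
  by apply: ereal_sup_eball_ge0 => // v; exact: enorm_ge0.
have I_ge0 x : (0 <= I x)%E.
  by apply: le_ereal_inf_tmp => _ [v _ <-]; rewrite lee_fin dratio_ge0.
have r_le x : ((dratio Q f x theta_star)%:E <= I x + k%:E * S x)%E.
  apply: inf_eball_ge => // v v_k; last exact: dratio_ge0.
  exact/dr/mem_set.
have one_le : (1 <= \int[Q]_x I x + k%:E * \int[Q]_x S x)%E.
  rewrite -ge0_integralZl // -ge0_integralD //; first last.
  - exact: measurable_funeM.
  - by move=> x _; rewrite mule_ge0 ?lee_fin.
  rewrite -(integral_dratio exp_int theta_star); apply: ge0_le_integral => //.
  - by move=> x _; rewrite lee_fin dratio_ge0.
  - exact: measurable_dratio.
  - exact: emeasurable_funD (measurable_funeM _ _).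
by rewrite EFinB leeBlDr // (le_trans one_le) // leeD2l.
Qed.
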